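(* Let $k$ be a field of characteristic $\neq2$, $f\in k[X]$ separable of degree $6$, $A=k[X]/(f)$, $\delta\in A^*$, and let $\Lambda$ be the set of $32$ lines $L_\varepsilon$ on $V_{f,\delta}\otimes\bar k$. Let $\Lambda_1,\Lambda_2$ be the two maximal subsets of $\Lambda$ consisting of lines of the same parity. Then $k(\Lambda_1)=k(\Lambda_2)=k\big(\sqrt{N(\delta)}\big)$, where $N=N_{A/k}$ is the norm from $A$ to $k$.
   Context: $V_{f,\delta}=\{[q]\in\mathbb{P}(A):\delta q^2\in\mathrm{span}(1,X,X^2)\}$. For $\varepsilon\in A\otimes\bar k$ with $\varepsilon^2=\delta$, $L_\varepsilon$ is the line corresponding to the subspace $\{\varepsilon^{-1}(sX+t)\}$. Let $\Omega$ be the roots of $f$ and $\varphi_\theta$ evaluation at $X=\theta$. Two lines $L_\varepsilon,L_{\varepsilon'}$ have the same parity if the number of $\theta\in\Omega$ with $\varphi_\theta(\varepsilon'/\varepsilon)=-1$ is even; this is independent of the signs of $\varepsilon,\varepsilon'$ since $\#\Omega=6$. For a set $Y$ acted on by $G(\bar k/k)$, $k(Y)$ is the smallest subfield $k'\supseteq k$ of $\bar k$ such that every $\sigma\in G(\bar k/k')$ maps $Y$ to itself. *)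

From HB Require Import structures.
From mathcomp Require Import all_boot all_order all_algebra all_field.
Set Implicit Arguments. Unset Strict Implicit. Unset Printing Implicit Defensive.
Import Order.TTheory GRing.Theory.
Local Open Scope ring_scope.

Section Defs.
Variables (k : fieldType) (K : closedFieldType) (iota : {rmorphism k -> K}).

(* K plays the role of \bar k : algebraically closed and algebraic over iota(k) *)
Definition algebraic_over : Prop :=
  forall x : K, exists p : {poly k}, p != 0 /\ root (map_poly iota p) x.

(* Norm N_{A/k}(delta), A = k[X]/(f), deg f = 6: determinant of the
   k-linear map "multiplication by delta" in the basis 1, X, ..., X^5. *)
Definition normA (f delta : {poly k}) : k :=
  \det (\matrix_(i < 6, j < 6) ((delta * 'X^i) %% f)`_j).

(* Elements of A (x) \bar k are represented by polynomials over K, modulo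
   fK = f^iota.  L_eps = { eps^{-1} (sX + t) : s, t in K }. *)
Definition lineL (fK eps : {poly K}) : {poly K} -> Prop :=
  fun q => exists e', (eps * e') %% fK = 1 /\
    exists s t : K, q = (e' * (s *: 'X + t%:P)) %% fK.

Definition is_sqrt (fK deltaK eps : {poly K}) : Prop :=
  (eps * eps) %% fK = deltaK %% fK.

Definition Lines (f delta : {poly k}) : ({poly K} -> Prop) -> Prop :=
  fun l => exists eps, is_sqrt (map_poly iota f) (map_poly iota delta) eps /\
    l = lineL (map_poly iota f) eps.

Definition even_sign_changes (fK eps1 eps2 : {poly K}) : Prop :=
  exists rs : seq K, uniq rs /\ (forall x, (x \in rs) = root fK x) /\
    ~~ odd (count (fun th => eps2.[th] / eps1.[th] == -1) rs).

Definition same_parity (f delta : {poly k}) (l1 l2 : {poly K} -> Prop) : Prop :=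
  let fK := map_poly iota f in let dK := map_poly iota delta in
  exists eps1 eps2, is_sqrt fK dK eps1 /\ is_sqrt fK dK eps2 /\
    l1 = lineL fK eps1 /\ l2 = lineL fK eps2 /\ even_sign_changes fK eps1 eps2.

Definition parity_set (f delta : {poly k}) (S : ({poly K} -> Prop) -> Prop) : Prop :=
  (forall l, S l -> Lines f delta l) /\
  (forall l1 l2, S l1 -> S l2 -> same_parity f delta l1 l2).

Definition maximal_parity_set (f delta : {poly k}) (S : ({poly K} -> Prop) -> Prop) : Prop :=
  parity_set f delta S /\
  forall S', parity_set f delta S' -> (forall l, S l -> S' l) -> forall l, S' l -> S l.

Definition is_subfield (F : K -> Prop) : Prop :=
  F 0 /\ F 1 /\ (forall x y, F x -> F y -> F (x - y)) /\
  (forall x y, F x -> F y -> F (x * y)) /\ (forall x, F x -> F x^-1).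

Definition ext_of_k (F : K -> Prop) : Prop :=
  is_subfield F /\ forall a : k, F (iota a).

Definition fixes (sigma : {rmorphism K -> K}) (F : K -> Prop) : Prop :=
  bijective sigma /\ forall x, F x -> sigma x = x.

Definition line_img (sigma : {rmorphism K -> K}) (l : {poly K} -> Prop) : {poly K} -> Prop :=
  fun q => exists q0, l q0 /\ q = map_poly sigma q0.

Definition stabilizes (sigma : {rmorphism K -> K}) (Y : ({poly K} -> Prop) -> Prop) : Prop :=
  forall l, Y l -> Y (line_img sigma l).

Definition preserved_over (F : K -> Prop) (Y : ({poly K} -> Prop) -> Prop) : Prop :=
  forall sigma : {rmorphism K -> K}, fixes sigma F -> stabilizes sigma Y.

Definition is_field_of_def (Y : ({poly K} -> Prop) -> Prop) (F : K -> Prop) : Prop :=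
  ext_of_k F /\ preserved_over F Y /\
  forall F', ext_of_k F' -> preserved_over F' Y -> forall x, F x -> F' x.

Definition adjoin (s : K) : K -> Prop :=
  fun x => forall F, ext_of_k F -> F s -> F x.

End Defs.

(* Let Omega be the roots of f.  A square root e of delta in A (x) \bar k is
   determined by its values e(theta) = +-sqrt(delta(theta)), and its norm
   N(e) = prod_theta e(theta) satisfies N(e)^2 = N(delta) = s^2, so N(e) = +-s.
   The lines L_e and L_e' have the same parity iff e'/e takes the value -1 an
   even number of times, i.e. iff N(e) = N(e'); a line determines e up to a
   global sign, which does not change N(e) because #Omega is even.  So the two
   parity classes are {L_e | N(e) = s} and {L_e | N(e) = -s}.  An automorphism
   sigma fixing k maps L_e to L_(sigma e) and N(e) to sigma(N(e)), hence it
   preserves each class iff sigma(s) = s.  Conversely, if a field F containing k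
   does not contain s, then s |-> -s extends over F, and by Zorn's lemma on
   partial embeddings (\bar k being algebraic over k) to an automorphism of
   \bar k fixing F that exchanges the two classes. *)

From HB Require Import structures.
From mathcomp Require Import all_boot all_order all_algebra all_field.
From mathcomp Require Import boolp classical_sets zify.
From mathcomp.algebra_tactics Require Import ring.
Set Implicit Arguments. Unset Strict Implicit. Unset Printing Implicit Defensive.
Import Order.TTheory GRing.Theory.
Local Open Scope ring_scope.

Lemma poly_drop1 (R : nzRingType) (p : {poly R}) : p = drop_poly 1 p * 'X + (p`_0)%:P.
Proof.
rewrite -[p in LHS](poly_take_drop 1) addrC expr1; congr (_ + _).
by apply/polyP => i; rewrite coef_take_poly coefC; case: i.
Qed.

Lemma size_sub_lead_monic (R : nzRingType) (m p : {poly R}) :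
  m \is monic -> (size m <= size p)%N ->
  (size (p - lead_coef p *: 'X^(size p - size m)%N * m)%R < size p)%N.
Proof.
move=> /monicP mm lemp; set d := (size p - size m)%N.
have sm : (0 < size m)%N by rewrite size_poly_gt0 -lead_coef_eq0 mm oner_neq0.
have sp : (0 < size p)%N by apply: leq_trans lemp.
suff : (size (p - lead_coef p *: 'X^d * m)%R <= (size p).-1)%N by move: sp; lia.
apply/leq_sizeP => j hj; rewrite coefB -scalerAl coefZ coefXnM.
have [ltpj|ltjp] := leqP (size p) j.
  rewrite nth_default //; case: ltnP => [_|lejd]; first by rewrite mulr0 subr0.
  rewrite nth_default ?mulr0 ?subr0 //.
  by move: ltpj lejd lemp; rewrite /d; move: (size p) (size m) => a b; lia.
have -> : j = (size p).-1 by move: hj ltjp; move: (size p) => a; lia.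
have -> : ((size p).-1 < d)%N = false.
  by apply/negbTE; rewrite -leqNgt /d; move: sm lemp; move: (size p) (size m) => a b; lia.
have -> : ((size p).-1 - d = (size m).-1)%N.
  by rewrite /d; move: sm lemp; move: (size p) (size m) => a b; lia.
by rewrite -!lead_coefE mm mulr1 subrr.
Qed.

Lemma quadratic_uniq_roots (K : idomainType) (a b c : K) (rs : seq K) :
  uniq rs -> (2 < size rs)%N -> {in rs, forall x, a * x ^+ 2 + b * x + c = 0} ->
  [/\ a = 0, b = 0 & c = 0].
Proof.
move=> urs rs_gt2 rsQ; set Q : {poly K} := a *: 'X^2 + b *: 'X + c%:P.
have Q0 : Q = 0.
  apply: contraTeq rs_gt2 => Qn; rewrite -leqNgt.
  have sQ : (size Q <= 3)%N.
    apply/leq_sizeP => j hj; rewrite /Q !coefD !coefZ coefXn coefX coefC.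
    by case: j hj => [|[|[|j]]] //= _; rewrite !mulr0 !addr0.
  suff : (size rs < size Q)%N by move: sQ; lia.
  apply: max_poly_roots => //; apply/allP => x /rsQ Qx.
  by rewrite /root /Q !(hornerD, hornerZ, hornerXn, hornerX, hornerC) Qx.
have coefQ i : Q`_i = 0 by rewrite Q0 coef0.
move: (coefQ 2%N) (coefQ 1%N) (coefQ 0%N).
by rewrite /Q !coefD !coefZ !coefXn !coefX !coefC /= !mulr1 !mulr0 !addr0 !add0r.
Qed.

Lemma lagrange_exists (K : fieldType) (rs : seq K) (g : K -> K) : uniq rs ->
  exists p : {poly K}, {in rs, forall th, p.[th] = g th}.
Proof.
elim: rs => [|a rs IH] /=; first by exists 0.
case/andP => ars /IH[p Hp]; set P := \prod_(t <- rs) ('X - t%:P).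
have Pa : P.[a] != 0.
  rewrite horner_prod prodf_seq_neq0; apply/allP => t trs /=.
  by rewrite hornerXsubC subr_eq0; apply: contraNneq ars => ->.
have Prs t : t \in rs -> P.[t] = 0 by move=> trs; apply/eqP; rewrite -/(root P t) root_prod_XsubC.
exists (p + ((g a - p.[a]) / P.[a]) *: P) => th; rewrite inE => /predU1P[->|thr].
  by rewrite hornerD hornerZ divfK // addrC subrK.
by rewrite hornerD hornerZ (Prs th thr) mulr0 addr0 Hp.
Qed.

Lemma map_inj_perm (T : eqType) (f : T -> T) (s : seq T) : injective f -> uniq s ->
  {subset map f s <= s} -> perm_eq (map f s) s.
Proof.
move=> finj us fs; have ufs : uniq (map f s) by rewrite map_inj_uniq.
have [_ eqs] := uniq_min_size ufs fs (eq_leq (esym (size_map _ _))).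
exact: uniq_perm.
Qed.

Lemma separable_split (K : closedFieldType) (p : {poly K}) : separable_poly p -> p != 0 ->
  exists rs, [/\ uniq rs, p = lead_coef p *: \prod_(z <- rs) ('X - z%:P)
                & size rs = (size p).-1].
Proof.
move=> sep p0; have [rs pE] := closed_field_poly_normal p; exists rs; split => //.
  rewrite -separable_prod_XsubC; apply: dvdp_separable sep.
  by rewrite [X in _ %| X]pE dvdpZr ?lead_coef_eq0 // dvdpp.
by rewrite [in RHS]pE size_scale ?lead_coef_eq0 // size_prod_XsubC.
Qed.

Section RMorphismOf.
Variables (K : fieldType) (g : K -> K).
Hypotheses (gB : forall x y, g (x - y) = g x - g y)
  (gM : forall x y, g (x * y) = g x * g y) (g1 : g 1 = 1).

Definition rmorph_of_fun := g.
HB.instance Definition _ := GRing.isZmodMorphism.Build K K rmorph_of_fun gB.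
HB.instance Definition _ := GRing.isMonoidMorphism.Build K K rmorph_of_fun (g1, gM).
Definition rmorph_of : {rmorphism K -> K} := rmorph_of_fun.

End RMorphismOf.

Section Subfield.
Variable K : closedFieldType.
Implicit Types (E S : K -> Prop) (p q : {poly K}).

Definition is_subsemiring S := [/\ S 0, S 1,
  forall x y, S x -> S y -> S (x + y) & forall x y, S x -> S y -> S (x * y)].

Lemma subsemiring_sum S (I : Type) (r : seq I) (F : I -> K) :
  is_subsemiring S -> (forall i, S (F i)) -> S (\sum_(i <- r) F i).
Proof.
case=> S0 _ SD _ SF; elim: r => [|i r IH]; first by rewrite big_nil.
by rewrite big_cons; apply: SD.
Qed.

Lemma subsemiring_expr S x n : is_subsemiring S -> S x -> S (x ^+ n).
Proof.
case=> _ S1 _ SM Sx; elim: n => [|n IH]; first by rewrite expr0.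
by rewrite exprS; apply: SM.
Qed.

Lemma subsemiring_subfield S : is_subsemiring S -> (forall x, S x -> S (- x)) ->
  (forall x, S x -> S x^-1) -> is_subfield S.
Proof.
case=> S0 S1 SD SM SN SV; do 2!split=> //.
by split=> [x y Sx Sy|]; [apply: SD => //; apply: SN | split].
Qed.

Definition poly_over E p := forall i, E p`_i.

Lemma subsemiring_horner E S p z : is_subsemiring S -> (forall x, E x -> S x) ->
  poly_over E p -> S z -> S p.[z].
Proof.
move=> SS ES Ep Sz; rewrite horner_coef; apply: subsemiring_sum => // i.
by have [_ _ _ SM] := SS; apply: SM; [exact: ES | exact: subsemiring_expr].
Qed.

Section SubfieldTheory.
Variables (E : K -> Prop) (HE : is_subfield E).

Lemma subfield0 : E 0. Proof. by case: HE. Qed.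
Lemma subfield1 : E 1. Proof. by case: HE => _ []. Qed.
Lemma subfieldB x y : E x -> E y -> E (x - y).
Proof. by case: HE => _ [_ [H _]]; apply: H. Qed.
Lemma subfieldM x y : E x -> E y -> E (x * y).
Proof. by case: HE => _ [_ [_ [H _]]]; apply: H. Qed.
Lemma subfieldV x : E x -> E x^-1. Proof. by case: HE => _ [_ [_ [_ H]]]; apply: H. Qed.

Lemma subfieldN x : E x -> E (- x).
Proof. by move=> Ex; rewrite -sub0r; apply: subfieldB => //; apply: subfield0. Qed.

Lemma subfieldD x y : E x -> E y -> E (x + y).
Proof. by move=> Ex Ey; rewrite -[y]opprK; apply: subfieldB => //; apply: subfieldN. Qed.

Lemma subfield_subsemiring : is_subsemiring E.
Proof. by split; [exact: subfield0 | exact: subfield1 | exact: subfieldD | exact: subfieldM]. Qed.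

Lemma poly_over0 : poly_over E 0.
Proof. by move=> i; rewrite coef0; apply: subfield0. Qed.

Lemma poly_overC c : E c -> poly_over E c%:P.
Proof. by move=> Ec i; rewrite coefC; case: (i == 0)%N; [exact: Ec | exact: subfield0]. Qed.

Lemma poly_overXn n : poly_over E 'X^n.
Proof. by move=> i; rewrite coefXn; case: (i == n); [exact: subfield1 | exact: subfield0]. Qed.

Lemma poly_overX : poly_over E 'X.
Proof. by move=> i; rewrite coefX; case: (i == 1)%N; [exact: subfield1 | exact: subfield0]. Qed.

Lemma poly_overD p q : poly_over E p -> poly_over E q -> poly_over E (p + q).
Proof. by move=> Ep Eq i; rewrite coefD; apply: subfieldD. Qed.

Lemma poly_overB p q : poly_over E p -> poly_over E q -> poly_over E (p - q).
Proof. by move=> Ep Eq i; rewrite coefB; apply: subfieldB. Qed.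

Lemma poly_overM p q : poly_over E p -> poly_over E q -> poly_over E (p * q).
Proof.
move=> Ep Eq i; rewrite coefM; apply: subsemiring_sum => [|j].
  exact: subfield_subsemiring.
exact: subfieldM.
Qed.

Lemma poly_overZ c p : E c -> poly_over E p -> poly_over E (c *: p).
Proof. by move=> Ec Ep i; rewrite coefZ; apply: subfieldM. Qed.

Lemma poly_over_horner p x : poly_over E p -> E x -> E p.[x].
Proof. exact: subsemiring_horner subfield_subsemiring _. Qed.

Lemma poly_over_drop1 p : poly_over E p -> poly_over E (drop_poly 1 p).
Proof. by move=> Ep i; rewrite coef_drop_poly. Qed.

Lemma poly_over_monic_divp m p : poly_over E m -> m \is monic -> poly_over E p ->
  exists q r, [/\ poly_over E q, poly_over E r, p = q * m + r & (size r < size m)%N].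
Proof.
move=> Em mmon; elim: {p}_.+1 {-2}p (ltnSn (size p)) => // n IH p sp Ep.
have [ltpm|lemp] := ltnP (size p) (size m).
  by exists 0, p; rewrite mul0r add0r; split => //; apply: poly_over0.
set c := lead_coef p; set d := (size p - size m)%N.
have Ec : E c by rewrite /c lead_coefE; apply: Ep.
have Ecd : poly_over E (c *: 'X^d) by exact: (poly_overZ Ec (poly_overXn d)).
have [q [r [Eq Er pE sr]]] := IH _ (leq_trans (size_sub_lead_monic mmon lemp) sp)
  (poly_overB Ep (poly_overM Ecd Em)).
exists (q + c *: 'X^d), r; split=> //; first exact: (poly_overD Eq Ecd).
by rewrite mulrDl -addrAC -pE subrK.
Qed.

End SubfieldTheory.
End Subfield.

Section Embedding.
Variable K : closedFieldType.
Implicit Types (E : K -> Prop) (p q : {poly K}).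

Definition embedding_on E (t : K -> K) := [/\ is_subfield E,
  forall x y, E x -> E y -> t (x + y) = t x + t y,
  forall x y, E x -> E y -> t (x * y) = t x * t y & t 1 = 1].

Definition extends (a b : (K -> Prop) * (K -> K)) :=
  (forall z, a.1 z -> b.1 z) /\ (forall z, a.1 z -> b.2 z = a.2 z).

Lemma extends_refl (a : (K -> Prop) * (K -> K)) : extends a a.
Proof. by split. Qed.

Lemma extends_trans (a b c : (K -> Prop) * (K -> K)) :
  extends a b -> extends b c -> extends a c.
Proof.
move=> [ab1 ab2] [bc1 bc2]; split=> [z az|z az]; first exact/bc1/ab1.
by rewrite bc2 ?ab2 //; apply: ab1.
Qed.

Section EmbeddingTheory.
Variables (E : K -> Prop) (t : K -> K) (Ht : embedding_on E t).

Let HE : is_subfield E. Proof. by case: Ht. Qed.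
Lemma embD x y : E x -> E y -> t (x + y) = t x + t y. Proof. by case: Ht => _ H _ _; apply: H. Qed.
Lemma embM x y : E x -> E y -> t (x * y) = t x * t y. Proof. by case: Ht => _ _ H _; apply: H. Qed.
Lemma emb1 : t 1 = 1. Proof. by case: Ht. Qed.

Lemma emb0 : t 0 = 0.
Proof.
have := embD (subfield0 HE) (subfield0 HE); rewrite addr0 => h.
by apply: (addrI (t 0)); rewrite addr0 -h.
Qed.

Lemma embN x : E x -> t (- x) = - t x.
Proof.
move=> Ex; have := embD Ex (subfieldN HE Ex); rewrite subrr emb0 => h.
by apply: (addrI (t x)); rewrite -h subrr.
Qed.

Lemma embB x y : E x -> E y -> t (x - y) = t x - t y.
Proof. by move=> Ex Ey; rewrite embD ?embN //; apply: subfieldN. Qed.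

Lemma emb_sum (I : Type) (r : seq I) (F : I -> K) :
  (forall i, E (F i)) -> t (\sum_(i <- r) F i) = \sum_(i <- r) t (F i).
Proof.
move=> EF; elim: r => [|i r IH]; first by rewrite !big_nil emb0.
rewrite !big_cons embD ?IH //; apply: subsemiring_sum => //.
exact: subfield_subsemiring.
Qed.

Lemma coef_map_emb p i : (map_poly t p)`_i = t p`_i.
Proof. by rewrite coef_map_id0 // emb0. Qed.

Lemma map_embB p q : poly_over E p -> poly_over E q ->
  map_poly t (p - q) = map_poly t p - map_poly t q.
Proof. by move=> Ep Eq; apply/polyP => i; rewrite coefB !coef_map_emb coefB embB. Qed.

Lemma map_embD p q : poly_over E p -> poly_over E q ->
  map_poly t (p + q) = map_poly t p + map_poly t q.
Proof. by move=> Ep Eq; apply/polyP => i; rewrite coefD !coef_map_emb coefD embD. Qed.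

Lemma map_embM p q : poly_over E p -> poly_over E q ->
  map_poly t (p * q) = map_poly t p * map_poly t q.
Proof.
move=> Ep Eq; apply/polyP => i; rewrite coefM coef_map_emb coefM emb_sum.
  by apply: eq_bigr => j _; rewrite !coef_map_emb embM.
by move=> j; apply: subfieldM.
Qed.

Lemma map_embC c : map_poly t c%:P = (t c)%:P.
Proof. by apply/polyP => i; rewrite coef_map_emb !coefC; case: (i == 0)%N; rewrite ?emb0. Qed.

Lemma map_embX : map_poly t 'X = 'X.
Proof.
by apply/polyP => i; rewrite coef_map_emb !coefX; case: (i == 1)%N; rewrite ?emb0 ?emb1.
Qed.

End EmbeddingTheory.
End Embedding.

Lemma root_poly_over_coef0 (K : closedFieldType) (E : K -> Prop) h z :
  is_subfield E -> z != 0 -> poly_over E h -> h != 0 -> h.[z] = 0 ->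
  exists2 h', poly_over E h' & h'.[z] = 0 /\ h'`_0 != 0.
Proof.
move=> HE nz; elim: {h}_.+1 {-2}h (ltnSn (size h)) => // n IH h sh Eh hn hz.
have [h0|] := eqVneq h`_0 0; last by exists h.
have hE : h = drop_poly 1 h * 'X by rewrite {1}(poly_drop1 h) h0 addr0.
have sd : (size (drop_poly 1 h) < n)%N.
  by rewrite size_drop_poly; move: hn; rewrite -size_poly_gt0; move: sh; lia.
have dn : drop_poly 1 h != 0 by apply: contraNneq hn => d0; rewrite {1}hE d0 mul0r.
have dz : (drop_poly 1 h).[z] = 0.
  by apply/eqP; move: hz; rewrite {1}hE hornerMX => /eqP; rewrite mulf_eq0 (negPf nz) orbF.
exact: IH sd (poly_over_drop1 Eh) dn dz.
Qed.

Lemma poly_over_root_opp (K : closedFieldType) (F : K -> Prop) s p :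
  is_subfield F -> ~ F s -> F (s ^+ 2) -> poly_over F p -> p.[s] = 0 -> p.[- s] = 0.
Proof.
move=> HF Fs Fs2 Fp ps.
(* s is not in F, so both F-coefficients of p(s) = a + b s vanish. *)
have pE z : p.[z] = (even_poly p).[z ^+ 2] + (odd_poly p).[z ^+ 2] * z.
  by rewrite -{1}(poly_even_odd p) hornerD hornerMX !horner_comp hornerXn.
set a := (even_poly p).[s ^+ 2]; set b := (odd_poly p).[s ^+ 2].
have Fa : F a by apply: (poly_over_horner HF) => // i; rewrite coef_even_poly.
have Fb : F b by apply: (poly_over_horner HF) => // i; rewrite coef_odd_poly.
have aE : a = - (b * s) by apply/eqP; rewrite -addr_eq0 -pE ps.
have b0 : b = 0.
  apply: contrapT => /eqP bn; apply: Fs.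
  have -> : s = - a / b by rewrite aE opprK mulrAC divff ?mul1r.
  exact: (subfieldM HF (subfieldN HF Fa) (subfieldV HF Fb)).
by rewrite pE sqrrN -/a -/b aE b0 !mul0r oppr0 add0r.
Qed.

Lemma adjoin_ext_of_k (k : fieldType) (K : closedFieldType) (iota : {rmorphism k -> K}) s :
  ext_of_k iota (adjoin iota s).
Proof.
split=> [|a F [_ Fk] _]; last exact: Fk.
split; first by move=> F [HF _] _; apply: subfield0.
split; first by move=> F [HF _] _; apply: subfield1.
split; first by move=> x y Ax Ay F EF Fs; apply: (subfieldB EF.1); [apply: Ax | apply: Ay].
split; first by move=> x y Ax Ay F EF Fs; apply: (subfieldM EF.1); [apply: Ax | apply: Ay].
by move=> x Ax F EF Fs; apply: (subfieldV EF.1); apply: Ax.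
Qed.

Lemma map_poly_fixing (k : fieldType) (K : closedFieldType) (iota : {rmorphism k -> K})
    (sg : {rmorphism K -> K}) (p : {poly k}) :
  (forall a, sg (iota a) = iota a) -> map_poly sg (map_poly iota p) = map_poly iota p.
Proof. by move=> sgk; rewrite -map_poly_comp; apply: eq_map_poly => a /=; apply: sgk. Qed.

Section Extension.
Variables (k : fieldType) (K : closedFieldType) (iota : {rmorphism k -> K}).
Hypothesis alg : algebraic_over iota.
Implicit Types (E S : K -> Prop) (p q : {poly K}).

Lemma subsemiring_invr_algebraic E S z : is_subfield E -> (forall a, E (iota a)) ->
  is_subsemiring S -> (forall x, E x -> S x) -> S z -> S z^-1.
Proof.
move=> HE Ek SS ES Sz; have [->|nz] := eqVneq z 0; first by rewrite invr0; case: SS.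
have [h Eh [hz h0]] : exists2 h, poly_over E h & h.[z] = 0 /\ h`_0 != 0.
  have [g [g0 gz]] := alg z; apply: (root_poly_over_coef0 (h := map_poly iota g)) => //.
  - by move=> i; rewrite coef_map; apply: Ek.
  - by rewrite map_poly_eq0.
  - exact/eqP.
(* h = d X + h(0), so z^-1 = - d(z) / h(0). *)
set d := drop_poly 1 h.
have h0E : h`_0 = - (d.[z] * z).
  by apply/eqP; rewrite -addr_eq0 addrC -hornerMXaddC -poly_drop1 hz.
have dz : d.[z] != 0 by apply: contraNneq h0 => d0; rewrite h0E d0 mul0r oppr0.
have -> : z^-1 = d.[z] * - (h`_0)^-1 by rewrite h0E invrN opprK invfM mulrA divff ?mul1r.
have [_ _ _ SM] := SS; apply: SM.
  by apply: subsemiring_horner SS ES _ Sz; apply: poly_over_drop1.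
by apply/ES/(subfieldN HE)/(subfieldV HE).
Qed.

Lemma embedding_extend E t x y : embedding_on E t -> (forall a, E (iota a)) ->
  (forall p, poly_over E p -> p.[x] = 0 -> (map_poly t p).[y] = 0) ->
  exists E' t', [/\ embedding_on E' t', extends (E, t) (E', t'), E' x & t' x = y].
Proof.
move=> Ht Ek compat; have HE : is_subfield E by case: Ht.
pose E' z := exists2 p, poly_over E p & z = p.[x].
pose graph z w := exists2 p, poly_over E p & z = p.[x] /\ w = (map_poly t p).[y].
(* t' (p(x)) := (t p)(y), well defined thanks to compat. *)
pose t' z := xget 0 (graph z).
have E'P p : poly_over E p -> E' p.[x] by exists p.
have t'E p : poly_over E p -> t' p.[x] = (map_poly t p).[y].
  move=> Ep; have [q Eq [qx ->]] : graph p.[x] (t' p.[x]).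
    by apply: xgetPex; exists (map_poly t p).[y], p.
  apply/eqP; rewrite -subr_eq0 -hornerN -hornerD -(map_embB Ht) //; apply/eqP.
  by apply: compat; [exact: poly_overB | rewrite hornerD hornerN qx subrr].
have E'D a b : E' a -> E' b -> E' (a + b).
  by move=> [p Ep ->] [q Eq ->]; rewrite -hornerD; apply/E'P/(poly_overD HE).
have E'M a b : E' a -> E' b -> E' (a * b).
  by move=> [p Ep ->] [q Eq ->]; rewrite -hornerM; apply/E'P/(poly_overM HE).
have EE' z : E z -> E' z by move=> Ez; rewrite -(hornerC z x); apply/E'P/(poly_overC HE).
have SE' : is_subsemiring E'.
  by split => //; apply: EE'; [apply: subfield0 | apply: subfield1].
have HE' : is_subfield E'.
  apply: subsemiring_subfield SE' _ (fun z => subsemiring_invr_algebraic HE Ek SE' EE').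
  by move=> _ [q Eq ->]; rewrite -hornerN -sub0r; apply/E'P/(poly_overB HE (poly_over0 HE)).
exists E', t'; split.
- split => //.
  + move=> _ _ [p Ep ->] [q Eq ->].
    by rewrite -hornerD !t'E ?(map_embD Ht) ?hornerD //; exact: (poly_overD HE Ep Eq).
  + move=> _ _ [p Ep ->] [q Eq ->].
    by rewrite -hornerM !t'E ?(map_embM Ht) ?hornerM //; exact: (poly_overM HE Ep Eq).
  + rewrite -{1}(hornerC 1 x) t'E; last exact/(poly_overC HE)/(subfield1 HE).
    by rewrite (map_embC Ht) (emb1 Ht) hornerC.
- split => //= z Ez.
  by rewrite -{1}(hornerC z x) t'E ?(map_embC Ht) ?hornerC //; exact: (poly_overC HE Ez).
- by rewrite -[x]hornerX; apply/E'P/(poly_overX HE).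
- by rewrite -[x]hornerX t'E ?(map_embX Ht) ?hornerX //; exact: (poly_overX HE).
Qed.


Lemma embedding_extend_algebraic E t x : embedding_on E t -> (forall a, E (iota a)) ->
  exists E' t', extends (E, t) (E', t') /\ embedding_on E' t' /\ E' x.
Proof.
move=> Ht Ek; have HE : is_subfield E by case: Ht.
pose annihilated n :=
  `[< exists2 m, poly_over E m & [/\ m \is monic, m.[x] = 0 & size m = n] >].
have exP : exists n, annihilated n.
  have [g [g0 gx]] := alg x; set h := map_poly iota g.
  have hn : h != 0 by rewrite map_poly_eq0.
  exists (size ((lead_coef h)^-1 *: h)); apply/asboolP; exists ((lead_coef h)^-1 *: h).
    apply: (poly_overZ HE); last by move=> i; rewrite coef_map; apply: Ek.
    by apply: (subfieldV HE); rewrite lead_coefE coef_map; apply: Ek.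
  split => //; first by rewrite monicE lead_coefZ mulVf ?lead_coef_eq0.
  by rewrite hornerZ (eqP gx) mulr0.
case: (ex_minnP exP) => _ /asboolP[m Em [mmon mx <-]] minm.
have [y ty] : exists y, root (map_poly t m) y.
  apply/closed_rootP; rewrite size_map_poly_id0; last by rewrite (monicP mmon) (emb1 Ht) oner_neq0.
  apply/eqP => m1; move: mx mmon.
  rewrite (size1_polyC (eq_leq m1)) hornerC monicE lead_coefC => ->.
  by rewrite eq_sym oner_eq0.
have compat p : poly_over E p -> p.[x] = 0 -> (map_poly t p).[y] = 0.
  move=> Ep px; have [q [r [Eq Er pE sr]]] := poly_over_monic_divp HE Em mmon Ep.
  have rx : r.[x] = 0 by move: px; rewrite pE hornerD hornerM mx mulr0 add0r.
  have r0 : r = 0.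
    apply: contraTeq sr => rn; have lr : lead_coef r != 0 by rewrite lead_coef_eq0.
    rewrite -leqNgt -(size_scale r (invr_neq0 lr)).
    apply: minm; apply/asboolP; exists ((lead_coef r)^-1 *: r).
      by apply: (poly_overZ HE) => //; apply: (subfieldV HE); rewrite lead_coefE.
    split => //; first by rewrite monicE lead_coefZ mulVf.
    by rewrite hornerZ rx mulr0.
  by rewrite pE r0 addr0 (map_embM Ht) // hornerM (eqP ty) mulr0.
have [E' [t' [Ht' ext E'x _]]] := embedding_extend Ht Ek compat.
by exists E', t'.
Qed.

Section Zorn.
Variables (E0 : K -> Prop) (t0 : K -> K).
Hypotheses (Ht0 : embedding_on E0 t0) (E0k : forall a, E0 (iota a)).

Let extension :=
  {pt : (K -> Prop) * (K -> K) | embedding_on pt.1 pt.2 /\ extends (E0, t0) pt}.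

Lemma extension_chain_ub (A : set extension) :
  total_on A (fun a b => extends (sval a) (sval b)) ->
  exists u : extension, forall a, A a -> extends (sval a) (sval u).
Proof.
move=> totA; have [[a0 Aa0]|A0] := pselect (exists a, A a); last first.
  by exists (exist _ (E0, t0) (conj Ht0 (extends_refl _))) => a Aa; case: A0; exists a.
have emb (a : extension) : embedding_on (sval a).1 (sval a).2 by case: (svalP a).
have sf (a : extension) : is_subfield (sval a).1 by case: (emb a).
have common a b : A a -> A b ->
    exists2 c, A c & extends (sval a) (sval c) /\ extends (sval b) (sval c).
  move=> Aa Ab; case: (totA a b Aa Ab) => ext.
    by exists b => //; split => //; apply: extends_refl.
  by exists a => //; split => //; apply: extends_refl.
pose EU z := exists2 a, A a & (sval a).1 z.
pose graph z w := exists2 a, A a & (sval a).1 z /\ w = (sval a).2 z.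
pose tU z := xget 0 (graph z).
have tUE a z : A a -> (sval a).1 z -> tU z = (sval a).2 z.
  move=> Aa az; have [b Ab [bz ->]] : graph z (tU z) by apply: xgetPex; exists ((sval a).2 z), a.
  by case: (common a b Aa Ab) => c _ [[_ ac] [_ bc]]; rewrite -(ac z az) -(bc z bz).
have in_common x y : EU x -> EU y -> exists2 c, A c & (sval c).1 x /\ (sval c).1 y.
  move=> [a Aa ax] [b Ab bx]; have [c Ac [[ac _] [bc _]]] := common a b Aa Ab.
  by exists c => //; split; [apply: ac | apply: bc].
have HEU : is_subfield EU.
  split; [|split; [|split; [|split]]].
  - by exists a0 => //; apply: subfield0.
  - by exists a0 => //; apply: subfield1.
  - move=> x y /in_common /[apply] -[c Ac [cx cy]].
    by exists c => //; apply: subfieldB.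
  - move=> x y /in_common /[apply] -[c Ac [cx cy]].
    by exists c => //; apply: subfieldM.
  - by move=> x [a Aa ax]; exists a => //; apply: subfieldV.
have HtU : embedding_on EU tU.
  split => //.
  - move=> x y /in_common /[apply] -[c Ac [cx cy]].
    by rewrite !(tUE c) //; [apply: (embD (emb c)) | apply: subfieldD].
  - move=> x y /in_common /[apply] -[c Ac [cx cy]].
    by rewrite !(tUE c) //; [apply: (embM (emb c)) | apply: subfieldM].
  - by rewrite (tUE a0) //; [apply: (emb1 (emb a0)) | apply: subfield1].
have [E0a0 t0a0] : extends (E0, t0) (sval a0) by case: (svalP a0).
have extU : extends (E0, t0) (EU, tU).
  split=> z z0 /=; first by exists a0 => //; apply: E0a0.
  by rewrite (tUE a0) ?t0a0 //; apply: E0a0.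
exists (exist _ (EU, tU) (conj HtU extU)) => a Aa /=.
by split=> z az; [exists a | apply: tUE].
Qed.

Lemma extension_rmorph : exists sg : {rmorphism K -> K}, forall z, E0 z -> sg z = t0 z.
Proof.
pose R (a b : extension) := `[< extends (sval a) (sval b) >].
have [[[Em tau] [Hm ext0]] tmax] : exists tm, premaximal R tm.
  apply: (@ZL_preorder _ (exist _ (E0, t0) (conj Ht0 (extends_refl _))) R).
  - by move=> a; apply/asboolP/extends_refl.
  - by move=> a b c /asboolP ab /asboolP bc; apply/asboolP/(extends_trans ab bc).
  - move=> A totA; have [|u ub] := @extension_chain_ub A.
      by move=> a b Aa Ab; case: (totA a b Aa Ab) => /asboolP; [left | right].
    by exists u => a Aa; apply/asboolP/ub.
have Emk a : Em (iota a) by apply: ext0.1; apply: E0k.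
have EmT x : Em x.
  have [E' [t' [ext' [Ht' E'x]]]] := embedding_extend_algebraic x Hm Emk.
  have ext0' := extends_trans ext0 ext'.
  have /asboolP[] := tmax (exist _ (E', t') (conj Ht' ext0')) (asboolT ext').
  by move=> /(_ x E'x).
pose sg := rmorph_of (fun x y => embB Hm (EmT x) (EmT y))
  (fun x y => embM Hm (EmT x) (EmT y)) (emb1 Hm).
by exists sg => z /ext0.2.
Qed.

End Zorn.

Lemma rmorph_fixing_bijective (sg : {rmorphism K -> K}) :
  (forall a, sg (iota a) = iota a) -> bijective sg.
Proof.
move=> sgk; have sg_surj w : exists z, sg z = w.
  have [g [g0 gw]] := alg w; set h := map_poly iota g.
  have [r hE] := closed_field_poly_normal h.
  have rootE z : root h z = (z \in r).
    by rewrite hE rootZ ?lead_coef_eq0 ?map_poly_eq0 // root_prod_XsubC.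
  have hsg : map_poly sg h = h := map_poly_fixing g sgk.
  have sg_r : {subset map sg (undup r) <= undup r}.
    move=> y /mapP[z]; rewrite !mem_undup -!rootE => hz ->.
    by rewrite -hsg /root horner_map (eqP hz) rmorph0.
  have : w \in map sg (undup r).
    by rewrite (perm_mem (map_inj_perm (fmorph_inj sg) (undup_uniq r) sg_r)) mem_undup -rootE.
  by case/mapP => z _ ->; exists z.
exists (fun w => xget 0 (fun z => sg z = w)) => [x|w].
  exact/(fmorph_inj sg)/(xgetPex 0 (P := fun z => sg z = sg x))/(ex_intro _ x erefl).
exact: (xgetPex 0 (P := fun z => sg z = w)).
Qed.

Lemma exists_rmorph_opp_sqrt F s : ext_of_k iota F -> ~ F s -> F (s ^+ 2) ->
  exists sg : {rmorphism K -> K}, fixes sg F /\ sg s = - s.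
Proof.
move=> [HF Fk] Fs Fs2.
have idF : embedding_on F id by [].
have compat p : poly_over F p -> p.[s] = 0 -> (map_poly id p).[- s] = 0.
  by move=> Fp ps; rewrite map_poly_id //; apply: poly_over_root_opp Fs Fs2 Fp ps.
have [E0 [t0 [Ht0 [/= FE0 t0F] E0s t0s]]] := embedding_extend idF Fk compat.
have [sg sgt0] := extension_rmorph Ht0 (fun a => FE0 _ (Fk a)).
have sgF x : F x -> sg x = x by move=> Fx; rewrite sgt0 ?t0F //; apply: FE0.
exists sg; split; last by rewrite sgt0.
by split=> //; apply: rmorph_fixing_bijective => a; apply/sgF/Fk.
Qed.

End Extension.

Definition norm_roots (K : fieldType) (rs : seq K) (p : {poly K}) := \prod_(th <- rs) p.[th].

Lemma normA_norm_roots (k : fieldType) (K : closedFieldType) (iota : {rmorphism k -> K})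
    (f delta : {poly k}) (rs : seq K) :
  size f = 7%N -> uniq rs -> size rs = 6%N -> {in rs, forall th, root (map_poly iota f) th} ->
  iota (normA f delta) = norm_roots rs (map_poly iota delta).
Proof.
move=> sf urs srs rrs; set fK := map_poly iota f; set dK := map_poly iota delta.
have sfK : size fK = 7%N by rewrite size_map_poly.
have fK0 : fK != 0 by rewrite -size_poly_eq0 sfK.
set M := \matrix_(i < 6, j < 6) ((dK * 'X^i) %% fK)`_j.
have -> : iota (normA f delta) = \det M.
  rewrite /normA -det_map_mx; congr (\det _); apply/matrixP => i j.
  by rewrite !mxE -coef_map_id0 ?rmorph0 // map_modp rmorphM /= map_polyXn.
set V := Vandermonde 6 (\row_(l < 6) rs`_l).
set D := diag_mx (\row_(l < 6) dK.[rs`_l]).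
have MV : M *m V = V *m D.
  apply/matrixP => i l; rewrite mul_mx_diag !mxE.
  rewrite (eq_bigr (fun j : 'I_6 => ((dK * 'X^i) %% fK)`_j * rs`_l ^+ j)) => [|j _]; last first.
    by rewrite !mxE.
  rewrite -(@horner_coef_wide _ 6 ((dK * 'X^i) %% fK)); last first.
    by have := ltn_modp (dK * 'X^i) fK; rewrite fK0 sfK.
  have rsl : rs`_l \in rs by rewrite mem_nth ?srs.
  have -> : ((dK * 'X^i) %% fK).[rs`_l] = (dK * 'X^i).[rs`_l].
    by rewrite [in RHS](divp_eq (dK * 'X^i) fK) hornerD hornerM (eqP (rrs _ rsl)) mulr0 add0r.
  by rewrite hornerM hornerXn mulrC.
have dV : \det V != 0.
  rewrite det_Vandermonde; apply/prodf_neq0 => i _; apply/prodf_neq0 => j ij.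
  by rewrite !mxE subr_eq0 nth_uniq ?srs // neq_ltn ij orbT.
have : \det M * \det V = \det D * \det V by rewrite -det_mulmx MV det_mulmx mulrC.
move=> /(mulIf dV) ->; rewrite det_diag /norm_roots [RHS](big_nth 0) srs big_mkord.
by apply: eq_bigr => l _; rewrite mxE.
Qed.

Section Roots.
Variables (K : closedFieldType) (fK dK : {poly K}) (rs : seq K).
Hypotheses (rs_uniq : uniq rs) (fK_neq0 : fK != 0)
  (fK_split : fK = lead_coef fK *: \prod_(z <- rs) ('X - z%:P))
  (dK_neq0 : {in rs, forall th, dK.[th] != 0}) (two_neq0 : 2 != 0 :> K).

Local Notation N := (norm_roots rs).

Lemma root_split x : root fK x = (x \in rs).
Proof. by rewrite fK_split rootZ ?lead_coef_eq0 // root_prod_XsubC. Qed.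

Lemma horner_modp_split p : {in rs, forall th, (p %% fK).[th] = p.[th]}.
Proof.
move=> th thr; rewrite [in RHS](divp_eq p fK) hornerD hornerM.
by move: thr; rewrite -root_split => /eqP ->; rewrite mulr0 add0r.
Qed.

Lemma modp_split_eq p q : {in rs, forall th, p.[th] = q.[th]} -> p %% fK = q %% fK.
Proof.
move=> pq; apply/eqP; rewrite -subr_eq0 -modpN -modpD; apply/eqP/modp_eq0.
rewrite fK_split dvdpZl ?lead_coef_eq0 //; apply: uniq_roots_dvdp; last by rewrite uniq_rootsE.
by apply/allP => th thr; rewrite /root hornerD hornerN pq // subrr.
Qed.

Lemma modp_split_inv e : rs != [::] -> {in rs, forall th, e.[th] != 0} ->
  exists e', (e * e') %% fK = 1.
Proof.
move=> rs0 enz; have [e' He'] := lagrange_exists (fun th => (e.[th])^-1) rs_uniq.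
exists e'; rewrite -[1 in RHS](@modp_small _ 1 fK); last first.
  by rewrite size_poly1 fK_split size_scale ?lead_coef_eq0 // size_prod_XsubC ltnS lt0n size_eq0.
by apply: modp_split_eq => th thr; rewrite hornerM He' // hornerC mulfV // enz.
Qed.

Lemma horner_modp_inv e e' : (e * e') %% fK = 1 -> {in rs, forall th, e'.[th] = (e.[th])^-1}.
Proof.
move=> ee' th thr; have := horner_modp_split (e * e') thr; rewrite ee' hornerC hornerM => h.
have enz : e.[th] != 0 by apply/eqP => e0; move: h; rewrite e0 mul0r => /eqP; rewrite oner_eq0.
by rewrite -[e'.[th]](mulKf enz) -h mulr1.
Qed.

Lemma sqrt_horner_sqr e : is_sqrt fK dK e -> {in rs, forall th, e.[th] ^+ 2 = dK.[th]}.
Proof.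
by move=> He th thr; rewrite expr2 -hornerM -(horner_modp_split _ thr) He horner_modp_split.
Qed.

Lemma sqrt_horner_neq0 e : is_sqrt fK dK e -> {in rs, forall th, e.[th] != 0}.
Proof.
move=> He th thr; have := dK_neq0 thr; rewrite -(sqrt_horner_sqr He thr).
by apply: contraNneq => ->; rewrite expr0n.
Qed.

Lemma norm_sqrt_neq0 e : is_sqrt fK dK e -> N e != 0.
Proof. by move=> He; rewrite prodf_seq_neq0; apply/allP => th /(sqrt_horner_neq0 He). Qed.

Lemma norm_sqrt_sqr e : is_sqrt fK dK e -> N e ^+ 2 = N dK.
Proof. by move=> He; rewrite -prodrXl; apply: eq_big_seq => th /(sqrt_horner_sqr He). Qed.

Section TwoSquareRoots.
Variables (e1 e2 : {poly K}).
Hypotheses (He1 : is_sqrt fK dK e1) (He2 : is_sqrt fK dK e2).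

Lemma sqrt_horner_sign : {in rs, forall th, e2.[th] = e1.[th] \/ e2.[th] = - e1.[th]}.
Proof.
move=> th thr; have /eqP : e2.[th] ^+ 2 - e1.[th] ^+ 2 = 0.
  by rewrite (sqrt_horner_sqr He1) ?(sqrt_horner_sqr He2) // subrr.
by rewrite subr_sqr mulf_eq0 subr_eq0 addr_eq0 => /orP[] /eqP; [left | right].
Qed.

Lemma prod_sqrt_horner_sign (s : seq K) : {subset s <= rs} ->
  \prod_(th <- s) e2.[th] =
  (-1) ^+ count (fun th => e2.[th] / e1.[th] == -1) s * \prod_(th <- s) e1.[th].
Proof.
elim: s => [|a s IH] srs; first by rewrite !big_nil mulr1.
have ars : a \in rs by apply: srs; rewrite mem_head.
rewrite !big_cons IH => [|x xs]; last by apply: srs; rewrite inE xs orbT.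
have nz := sqrt_horner_neq0 He1 ars; rewrite /= exprD.
case: (sqrt_horner_sign ars) => ->.
  have -> : (e1.[a] / e1.[a] == -1) = false.
    by rewrite divff // -addr_eq0 (_ : 1 + 1 = 2) // (negPf two_neq0).
  by rewrite /= expr0 mul1r; ring.
have -> : (- e1.[a] / e1.[a] == -1) = true by rewrite mulNr divff ?eqxx.
by rewrite /= expr1; ring.
Qed.

Lemma even_sign_changesE : even_sign_changes fK e1 e2 <-> N e1 = N e2.
Proof.
have sign_prod := prod_sqrt_horner_sign (s := rs) (fun x xr => xr).
split=> [[rs' [urs' [rs'E ev]]]|eqN].
  have pe : perm_eq rs rs' by apply: uniq_perm => // x; rewrite rs'E root_split.
  move: sign_prod; rewrite (permP pe) -signr_odd (negPf ev) expr0 mul1r.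
  by rewrite /norm_roots => ->.
exists rs; split => //; split=> [x|]; first by rewrite root_split.
apply/negP => od; move: sign_prod; rewrite -signr_odd od expr1 -!/(N _) -eqN.
move/eqP; rewrite mulN1r -addr_eq0 -mulr2n -mulr_natr mulf_eq0 (negPf (norm_sqrt_neq0 He1)).
by rewrite (negPf two_neq0).
Qed.

Lemma lineL_norm : ~~ odd (size rs) -> (2 < size rs)%N ->
  lineL fK e1 = lineL fK e2 -> N e1 = N e2.
Proof.
move=> rs_even rs_gt2 eL; have rs0 : rs != [::] by case: (rs) rs_gt2.
have [e1' i1] := modp_split_inv rs0 (sqrt_horner_neq0 He1).
have mem (a b : K) : lineL fK e2 ((e1' * (a *: 'X + b%:P)) %% fK).
  by rewrite -eL; exists e1'; split => //; exists a, b.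
have [e2a [i2a [a [b ea]]]] := mem 0 1.
have [e2b [i2b [c [d eb]]]] := mem 1 0.
(* Both e1^-1 and e1^-1 X lie on L_e2, so r = e2/e1 and X r are affine on the
   roots; having at least three roots, r is a constant b, and b = +-1. *)
pose r th := e2.[th] / e1.[th].
have rE th : th \in rs -> r th = a * th + b /\ th * r th = c * th + d.
  move=> thr; have n1 := sqrt_horner_neq0 He1 thr; have n2 := sqrt_horner_neq0 He2 thr.
  have := congr1 (horner^~ th) ea; have := congr1 (horner^~ th) eb.
  rewrite /= !horner_modp_split // !(hornerM, hornerD, hornerZ, hornerX, hornerC).
  rewrite (horner_modp_inv i1) // (horner_modp_inv i2a) // (horner_modp_inv i2b) // /r.
  move=> h2 h1; split; apply: (mulfI (invr_neq0 n2)); [rewrite -h1 | rewrite -h2].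
  - by field; rewrite n1 n2.
  - by field; rewrite n1 n2.
have [a0 _ _] : [/\ a = 0, b - c = 0 & - d = 0].
  apply: quadratic_uniq_roots rs_uniq rs_gt2 _ => th /rE[r1 r2].
  have -> : - d = c * th - th * (a * th + b) by rewrite -r1 r2; ring.
  ring.
have e2E th : th \in rs -> e2.[th] = b * e1.[th].
  move=> thr; have [r1 _] := rE th thr; move: r1; rewrite a0 mul0r add0r /r => <-.
  by rewrite divfK // (sqrt_horner_neq0 He1 thr).
have bn : b ^+ size rs = 1.
  have th0 : rs`_0 \in rs by rewrite mem_nth // lt0n size_eq0.
  have n1 := sqrt_horner_neq0 He1 th0.
  case: (sqrt_horner_sign th0); rewrite e2E // => h.
    by rewrite -[b](mulfK n1) h divff // expr1n.
  by rewrite -[b](mulfK n1) h mulNr divff // -signr_odd (negPf rs_even) expr0.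
rewrite /norm_roots [RHS](eq_big_seq (fun th => b * e1.[th])) => [|th /e2E //].
rewrite big_split /=.
have -> : \prod_(th <- rs) b = b ^+ size rs by rewrite (big_nth 0) prodr_const_nat subn0.
by rewrite bn mul1r.
Qed.

End TwoSquareRoots.

Lemma is_sqrt_exists : exists e, is_sqrt fK dK e.
Proof.
have sq (a : K) : exists w, w ^+ 2 = a.
  have /closed_rootP[w] : size ('X^2 - a%:P : {poly K}) != 1 by rewrite size_XnsubC.
  by rewrite rootE hornerD hornerN hornerXn hornerC subr_eq0 => /eqP; exists w.
pose w (a : K) := xget 0 (fun w : K => w ^+ 2 = a).
have [e He] := lagrange_exists (fun th => w dK.[th]) rs_uniq.
exists e; apply: modp_split_eq => th thr.
by rewrite hornerM He // -expr2; apply: (xgetPex 0 (P := fun w => w ^+ 2 = dK.[th])).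
Qed.

Lemma line_img_sub (sg : {rmorphism K -> K}) e q : map_poly sg fK = fK ->
  line_img sg (lineL fK e) q -> lineL fK (map_poly sg e) q.
Proof.
move=> sg_fK [_ [[e' [ie [a [b ->]]]] ->]]; exists (map_poly sg e'); split.
  by rewrite -rmorphM -[in LHS]sg_fK -map_modp ie rmorph1.
exists (sg a), (sg b).
by rewrite map_modp sg_fK rmorphM rmorphD /= map_polyZ map_polyX map_polyC.
Qed.

Section Conjugation.
Variable sg : {rmorphism K -> K}.
Hypotheses (sg_fK : map_poly sg fK = fK) (sg_dK : map_poly sg dK = dK).

Lemma is_sqrt_map e : is_sqrt fK dK e -> is_sqrt fK dK (map_poly sg e).
Proof.
by move=> He; rewrite /is_sqrt -rmorphM -[in LHS]sg_fK -map_modp He map_modp sg_fK sg_dK.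
Qed.

Lemma norm_map e : N (map_poly sg e) = sg (N e).
Proof.
rewrite /norm_roots rmorph_prod -(perm_big _ (map_inj_perm (fmorph_inj sg) rs_uniq _)).
  by rewrite big_map; apply: eq_bigr => th _; rewrite horner_map.
move=> _ /mapP[th thr ->]; rewrite -root_split -sg_fK /root horner_map.
by move: thr; rewrite -root_split => /eqP ->; rewrite rmorph0.
Qed.


Lemma line_img_lineL e : bijective sg ->
  line_img sg (lineL fK e) = lineL fK (map_poly sg e).
Proof.
case=> g sgK gK.
have gB x y : g (x - y) = g x - g y by apply: (can_inj sgK); rewrite rmorphB !gK.
have gM x y : g (x * y) = g x * g y by apply: (can_inj sgK); rewrite rmorphM !gK.
have g1 : g 1 = 1 by apply: (can_inj sgK); rewrite rmorph1 gK.
pose sg' := rmorph_of gB gM g1.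
have map_sgK p : map_poly sg' (map_poly sg p) = p.
  by rewrite -map_poly_comp map_poly_id // => x _ /=; apply: sgK.
have map_gK p : map_poly sg (map_poly sg' p) = p.
  by rewrite -map_poly_comp map_poly_id // => x _ /=; apply: gK.
have sg'_fK : map_poly sg' fK = fK by rewrite -[in LHS]sg_fK map_sgK.
apply: funext => q; apply: propext; split; first exact: line_img_sub.
move=> hq; exists (map_poly sg' q); split; last by rewrite map_gK.
rewrite -[e]map_sgK; apply: (line_img_sub sg'_fK).
by exists q.
Qed.

End Conjugation.

Section Parity.
Variables (k : fieldType) (iota : {rmorphism k -> K}) (f delta : {poly k}).
Variables (c : k) (s : K) (Lam : ({poly K} -> Prop) -> Prop).
Hypotheses (fK_def : map_poly iota f = fK) (dK_def : map_poly iota delta = dK)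
  (rs_even : ~~ odd (size rs)) (rs_gt2 : (2 < size rs)%N)
  (normE : N dK = iota c) (s_sqr : s ^+ 2 = iota c)
  (Lam_max : maximal_parity_set iota f delta Lam).

Lemma same_parity_lineL e1 e2 : is_sqrt fK dK e1 -> is_sqrt fK dK e2 ->
  same_parity iota f delta (lineL fK e1) (lineL fK e2) <-> N e1 = N e2.
Proof.
move=> He1 He2; rewrite /same_parity fK_def dK_def; split.
  move=> [e1' [e2' [He1' [He2' [l1 [l2 ev]]]]]].
  rewrite (lineL_norm He1 He1') // (lineL_norm He2 He2') //.
  exact/(even_sign_changesE He1' He2').
by move=> eqN; exists e1, e2; do 4!split => //; apply/even_sign_changesE.
Qed.

Lemma norm_sqrt_pm e : is_sqrt fK dK e -> N e = s \/ N e = - s.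
Proof.
move=> He; have /eqP : N e ^+ 2 - s ^+ 2 = 0 by rewrite norm_sqrt_sqr // normE s_sqr subrr.
by rewrite subr_sqr mulf_eq0 subr_eq0 addr_eq0 => /orP[] /eqP; [left | right].
Qed.

Lemma Lam_lineL l : Lam l -> exists2 e, is_sqrt fK dK e & l = lineL fK e.
Proof.
have [[LamL _] _] := Lam_max; move=> /LamL[e []].
by rewrite fK_def dK_def => He ->; exists e.
Qed.

Lemma Lam_norm e1 e2 : is_sqrt fK dK e1 -> is_sqrt fK dK e2 ->
  Lam (lineL fK e1) -> Lam (lineL fK e2) -> N e1 = N e2.
Proof.
have [[_ LamP] _] := Lam_max.
by move=> He1 He2 L1 L2; apply/(same_parity_lineL He1 He2)/LamP.
Qed.

Lemma Lam_lineL_mem e : is_sqrt fK dK e ->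
  (forall e', is_sqrt fK dK e' -> Lam (lineL fK e') -> N e' = N e) -> Lam (lineL fK e).
Proof.
move=> He normLam; have [[LamL LamP] Lmax] := Lam_max.
have same l : Lam l -> same_parity iota f delta l (lineL fK e) /\
                       same_parity iota f delta (lineL fK e) l.
  move=> Ll; have [e' He' le'] := Lam_lineL Ll; rewrite le' in Ll *.
  by split; apply/same_parity_lineL => //; rewrite normLam.
apply: (Lmax (fun l => Lam l \/ l = lineL fK e)); [split | by move=> l; left | by right].
  by move=> l [/LamL // | ->]; exists e; rewrite fK_def dK_def.
move=> l1 l2 [L1|->] [L2|->]; first exact: LamP.
- exact: (same _ L1).1.
- exact: (same _ L2).2.
- exact/same_parity_lineL.
Qed.

Lemma Lam_exists : exists2 e, is_sqrt fK dK e & Lam (lineL fK e).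
Proof.
have [[l Ll]|noLam] := pselect (exists l, Lam l).
  by have [e He le] := Lam_lineL Ll; exists e; rewrite -?le.
have [e He] := is_sqrt_exists; exists e => //.
by apply: Lam_lineL_mem => // e' _ L'; case: noLam; exists (lineL fK e').
Qed.

Lemma map_poly_fixing_split (sg : {rmorphism K -> K}) : (forall a, sg (iota a) = iota a) ->
  map_poly sg fK = fK /\ map_poly sg dK = dK.
Proof. by move=> sgk; rewrite -fK_def -dK_def !map_poly_fixing. Qed.

Lemma preserved_over_adjoin : preserved_over (adjoin iota s) Lam.
Proof.
move=> sg [sg_bij sg_fix] l Ll.
have sgs : sg s = s by apply: sg_fix => F _.
have sgk a : sg (iota a) = iota a by apply: sg_fix => F [_ Fk] _.
have [sg_fK sg_dK] := map_poly_fixing_split sgk.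
have [e He le] := Lam_lineL Ll; rewrite le in Ll *.
rewrite line_img_lineL //; apply: Lam_lineL_mem; first exact: is_sqrt_map.
move=> e' He' L'; rewrite norm_map // (Lam_norm He' He L' Ll).
by case: (norm_sqrt_pm He) => ->; rewrite ?rmorphN sgs.
Qed.

Hypothesis alg : algebraic_over iota.

Lemma adjoin_sub F : ext_of_k iota F -> preserved_over F Lam ->
  forall x, adjoin iota s x -> F x.
Proof.
move=> HF presF x; apply => //; apply: contrapT => Fs.
have Fs2 : F (s ^+ 2) by rewrite s_sqr; apply: HF.2.
have [sg [[sg_bij sg_fix] sgs]] := exists_rmorph_opp_sqrt alg HF Fs Fs2.
have sgk a : sg (iota a) = iota a by apply/sg_fix/HF.2.
have [sg_fK sg_dK] := map_poly_fixing_split sgk.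
have [e He Le] := Lam_exists.
have := presF sg (conj sg_bij sg_fix) _ Le; rewrite line_img_lineL // => Lsg.
have sgN : sg (N e) = - N e by case: (norm_sqrt_pm He) => ->; rewrite ?rmorphN sgs ?opprK.
have := Lam_norm (is_sqrt_map sg_fK sg_dK He) He Lsg Le; rewrite norm_map // sgN => /eqP.
rewrite eq_sym -addr_eq0 -mulr2n -mulr_natr mulf_eq0 (negPf (norm_sqrt_neq0 He)).
by rewrite (negPf two_neq0).
Qed.

End Parity.

End Roots.

Theorem lemma2p39 (k : fieldType) (K : closedFieldType) (iota : {rmorphism k -> K})
  (f delta : {poly k}) (s : K) (Lam : ({poly K} -> Prop) -> Prop) :
  algebraic_over iota ->
  2 \notin [pchar k] ->
  separable_poly f -> size f = 7%N ->
  coprimep delta f ->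
  s ^+ 2 = iota (normA f delta) ->
  maximal_parity_set iota f delta Lam ->
  is_field_of_def iota Lam (adjoin iota s).
Proof.
move=> alg ch2 sep sf cop s_sqr Lam_max.
set fK := map_poly iota f; set dK := map_poly iota delta.
have fK_neq0 : fK != 0 by rewrite -size_poly_eq0 size_map_poly sf.
have fK_sep : separable_poly fK by rewrite separable_map.
have [rs [rs_uniq fK_split]] := separable_split fK_sep fK_neq0.
rewrite size_map_poly sf /= => rs_size.
have rs_roots : {in rs, forall th, root fK th} by move=> th; rewrite (root_split fK_neq0 fK_split).
have dK_neq0 : {in rs, forall th, dK.[th] != 0}.
  by move=> th /rs_roots; apply: coprimep_root; rewrite coprimep_map coprimep_sym.
have two_neq0 : 2 != 0 :> K.
  by rewrite -(rmorph_nat iota 2) fmorph_eq0; apply: contra ch2 => two0; rewrite inE /= two0.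
have normE := esym (normA_norm_roots delta sf rs_uniq rs_size rs_roots).
have rs_even : ~~ odd (size rs) by rewrite rs_size.
have rs_gt2 : (2 < size rs)%N by rewrite rs_size.
split; first exact: adjoin_ext_of_k.
split; first exact: (preserved_over_adjoin rs_uniq fK_neq0 fK_split dK_neq0 two_neq0
  erefl erefl rs_even rs_gt2 normE s_sqr Lam_max).
exact: (adjoin_sub rs_uniq fK_neq0 fK_split dK_neq0 two_neq0
  erefl erefl rs_even rs_gt2 normE s_sqr Lam_max alg).
Qed.
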